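(* For every $n\in\mathbb N$, $\theta_n(B_n)>c\sqrt n$ with $c=\dfrac{\sqrt[3]{\pi}}{\sqrt{12e}\cdot\sqrt[6]{3}}=0.2135\ldots$. Together with the upper bound $\theta_n(B_n)\le\sqrt{n+1}$, this gives $\theta_n(B_n)\asymp\sqrt n$.
   Context: $B_n$ is the closed unit Euclidean ball in $\mathbb R^n$. For nodes $x^{(1)},\dots,x^{(n+1)}\in B_n$ that are vertices of a nondegenerate simplex, the interpolation projector $P:C(B_n)\to\Pi_1(\mathbb R^n)$ maps $f$ to the unique polynomial $p$ of degree $\le1$ with $p(x^{(j)})=f(x^{(j)})$; $\|P\|_{B_n}$ is its operator norm with respect to the sup norm, and $\theta_n(B_n)$ is the minimum of $\|P\|_{B_n}$ over all such node sets. $L(n)\asymp M(n)$ means $c_1M(n)\le L(n)\le c_2M(n)$ for constants $c_1,c_2>0$ independent of $n$. *)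

From HB Require Import structures.
From mathcomp Require Import all_boot all_order all_algebra.
From mathcomp Require Import all_classical all_reals all_analysis.
Set Implicit Arguments. Unset Strict Implicit. Unset Printing Implicit Defensive.
Import Order.TTheory GRing.Theory Num.Theory.
Import numFieldNormedType.Exports.
Local Open Scope classical_set_scope.
Local Open Scope ring_scope.

Section Defs.
Variables (R : realType) (n : nat).

Definition dotp (a x : 'rV[R]_n) : R := \sum_(i < n) a ord0 i * x ord0 i.

Definition unit_ball : set 'rV[R]_n := [set x | dotp x x <= 1].

(* nodes x^(1..n+1) are vertices of a nondegenerate simplex:
   the (n+1)x(n+1) matrix with rows (1, x^(j)) is invertible *)
Definition nondeg_simplex (x : 'I_n.+1 -> 'rV[R]_n) : Prop :=
  \det (\matrix_(j < n.+1, k < n.+1)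
          (match @fintype.split 1 n k with
           | inl _ => 1
           | inr k' => x j ord0 k'
           end)) != 0.

Definition affine (a : 'rV[R]_n) (b : R) (y : 'rV[R]_n) : R := dotp a y + b.

Definition interpolates (x : 'I_n.+1 -> 'rV[R]_n) (f : 'rV[R]_n -> R)
    (a : 'rV[R]_n) (b : R) : Prop :=
  forall j, affine a b (x j) = f (x j).

(* ||P||_{B_n} = sup { ||P f||_{C(B_n)} : f in C(B_n), ||f||_{C(B_n)} <= 1 },
   written as the sup of |(Pf)(y)| over y in B_n and such f. *)
Definition proj_norm (x : 'I_n.+1 -> 'rV[R]_n) : R :=
  sup [set t : R | exists (f : 'rV[R]_n -> R) (a : 'rV[R]_n) (b : R) (y : 'rV[R]_n),
         [/\ {within unit_ball, continuous f},
             (forall z, unit_ball z -> `|f z| <= 1),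
             interpolates x f a b,
             unit_ball y &
             t = `|affine a b y|]].

Definition theta : R :=
  inf [set t : R | exists x : 'I_n.+1 -> 'rV[R]_n,
         [/\ forall j, unit_ball (x j), nondeg_simplex x & t = proj_norm x]].

End Defs.

Definition const_c (R : realType) : R :=
  pi `^ (3%:R^-1) / (Num.sqrt (12%:R * expR 1) * 3%:R `^ (6%:R^-1)).

(* If [l_j(y) = a_j . y + b_j] are the Lagrange polynomials of the nodes, then
   [l_j] rises by 1 between two points of the ball, so [|a_j| >= 1/2].  Choosing signs [s_j]
   with [|sum_j s_j a_j|^2 >= sum_j |a_j|^2 >= (n+1)/4], a continuous [f] with [|f| <= 1] and
   [f(x_j) = s_j] has interpolant [sum_j s_j l_j], whose gradient has length at least
   [sqrt(n+1)/2]; so [theta_n(B_n) >= sqrt(n+1)/2 > c sqrt n], as [c < 1/2].  The vertices of a regular simplex inscribed in the unit sphere satisfy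
   [sum_j a . x_j = 0] and [sum_j (a . x_j)^2 = (n+1)/n |a|^2]; hence [|f| <= 1] at the nodes
   gives [|a|^2 + n b^2 <= n], and then [(a . y + b)^2 <= n + 1] on the ball. *)

From HB Require Import structures.
From mathcomp Require Import all_boot all_order all_algebra.
From mathcomp Require Import all_classical all_reals all_analysis.
From mathcomp Require Import ring lra.
Import Order.TTheory GRing.Theory Num.Theory.
Import numFieldNormedType.Exports.
Local Open Scope classical_set_scope.
Local Open Scope ring_scope.
Set Implicit Arguments. Unset Strict Implicit. Unset Printing Implicit Defensive.

Lemma sqr_add_le_weighted (R : realFieldType) (N u b : R) :
  0 < N -> u ^+ 2 + N * b ^+ 2 <= N -> (u + b) ^+ 2 <= N + 1.
Proof.
move=> N_gt0 ub_le.
(* [(N + 1) (u^2 + N b^2) - N (u + b)^2 = (u - N b)^2] *)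
have : N * (u + b) ^+ 2 <= N * (N + 1) by have := sqr_ge0 (u - N * b); nra.
by rewrite ler_pM2l.
Qed.

Section InnerProduct.
Variables (R : realType) (n : nat).
Implicit Types (a v x y z : 'rV[R]_n) (c : R).

Lemma dotpC a x : dotp a x = dotp x a.
Proof. by apply: eq_bigr => i _; rewrite mulrC. Qed.

Lemma dotpDl a v x : dotp (a + v) x = dotp a x + dotp v x.
Proof. by rewrite /dotp -big_split; apply: eq_bigr => i _; rewrite mxE mulrDl. Qed.

Lemma dotpZl c a x : dotp (c *: a) x = c * dotp a x.
Proof. by rewrite /dotp mulr_sumr; apply: eq_bigr => i _; rewrite mxE mulrA. Qed.

Lemma dotpNl a x : dotp (- a) x = - dotp a x.
Proof. by rewrite -scaleN1r dotpZl mulN1r. Qed.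

Lemma dotp0l x : dotp 0 x = 0.
Proof. by rewrite -(scale0r 0) dotpZl mul0r. Qed.

Lemma dotp_suml (I : finType) (F : I -> 'rV[R]_n) x :
  dotp (\sum_i F i) x = \sum_i dotp (F i) x.
Proof.
rewrite /dotp exchange_big /=; apply: eq_bigr => i _.
by rewrite summxE mulr_suml.
Qed.

Lemma dotpDr a x y : dotp a (x + y) = dotp a x + dotp a y.
Proof. by rewrite dotpC dotpDl !(dotpC a). Qed.

Lemma dotpZr c a x : dotp a (c *: x) = c * dotp a x.
Proof. by rewrite dotpC dotpZl dotpC. Qed.

Lemma dotpNr a x : dotp a (- x) = - dotp a x.
Proof. by rewrite dotpC dotpNl dotpC. Qed.

Lemma dotp_ge0 a : 0 <= dotp a a.
Proof. by apply: sumr_ge0 => i _; rewrite -expr2 sqr_ge0. Qed.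

Lemma unit_ball0 : unit_ball (0 : 'rV[R]_n).
Proof. by rewrite /unit_ball /= dotp0l ler01. Qed.

Lemma dotp_eq0 a : (dotp a a == 0) = (a == 0).
Proof.
apply/eqP/eqP => [a0|->]; last exact: dotp0l.
apply/rowP => i; rewrite mxE; apply/eqP; rewrite -sqrf_eq0 expr2; apply/eqP.
by apply: (psumr_eq0P _ a0) => // j _; rewrite -expr2 sqr_ge0.
Qed.

Lemma dotp_subZ a x c :
  dotp (a - c *: x) (a - c *: x) = dotp a a - 2 * c * dotp a x + c ^+ 2 * dotp x x.
Proof. by rewrite !(dotpDl, dotpDr, dotpNl, dotpNr, dotpZl, dotpZr) (dotpC x a); ring. Qed.

(* Cauchy-Schwarz, through 0 <= |a - (a.y) y|^2. *)
Lemma dotp_sqr_le_ball a y : dotp y y <= 1 -> dotp a y ^+ 2 <= dotp a a.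
Proof.
move=> y_ball; have := dotp_ge0 (a - dotp a y *: y); rewrite dotp_subZ.
have : dotp a y ^+ 2 * dotp y y <= dotp a y ^+ 2 by rewrite ler_piMr ?sqr_ge0.
nra.
Qed.

(* [y - z] has length at most 2 and [a] has inner product 1 with it. *)
Lemma dotp_ge_quarter a y z : dotp y y <= 1 -> dotp z z <= 1 ->
  dotp a y - dotp a z = 1 -> 1 / 4 <= dotp a a.
Proof.
move=> y_ball z_ball gap.
have a_yz : dotp a (y - z) = 1 by rewrite dotpDr dotpNr.
have yz_le : dotp (y - z) (y - z) <= 4.
  have := dotp_ge0 (y + z).
  rewrite !(dotpDl, dotpDr, dotpNl, dotpNr) (dotpC z y); lra.
have := dotp_ge0 (a - (1 / 4) *: (y - z)); rewrite dotp_subZ a_yz; lra.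
Qed.

(* Choose the signs greedily, one vector at a time, so that no cross term is negative. *)
Lemma exists_signs_sum_dotp_ge m (a : 'I_m -> 'rV[R]_n) :
  exists s : 'I_m -> R, (forall j, s j = 1 \/ s j = -1) /\
    \sum_j dotp (a j) (a j) <= dotp (\sum_j s j *: a j) (\sum_j s j *: a j).
Proof.
elim: m a => [|m IH] a.
  by exists (fun _ => 1); split=> [j|]; [left | rewrite !big_ord0 dotp0l].
have [s [s_sign s_le]] := IH (fun i => a (lift ord0 i)).
set W := \sum_j s j *: a (lift ord0 j) in s_le.
pose s0 : R := if 0 <= dotp (a ord0) W then 1 else -1.
have s0_cross : 0 <= s0 * dotp (a ord0) W.
  by rewrite /s0; case: ifP => h; rewrite ?mul1r // mulN1r oppr_ge0 ltW // ltNge h.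
have s0_sqr : s0 * s0 = 1 by rewrite /s0; case: ifP => _; rewrite ?mulr1 ?mulrNN ?mulr1.
exists (fun j => if unlift ord0 j is Some i then s i else s0); split.
  move=> j; case: (unlift ord0 j) => [i|]; first exact: s_sign.
  by rewrite /s0; case: ifP; [left | right].
rewrite !big_ord_recl /= unlift_none.
under [X in dotp (_ + X)]eq_bigr => i _ do rewrite liftK.
under [X in dotp _ (_ + X)]eq_bigr => i _ do rewrite liftK.
rewrite -/W !(dotpDl, dotpDr, dotpZl, dotpZr) (dotpC W) mulrA s0_sqr; lra.
Qed.

End InnerProduct.

Section Affine.
Variables (R : realType) (n : nat).
Implicit Types (a y : 'rV[R]_n) (b : R).

Lemma affine00 y : affine 0 0 y = 0.
Proof. by rewrite /affine dotp0l addr0. Qed.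

Lemma affineB a a' b b' y :
  affine (a - a') (b - b') y = affine a b y - affine a' b' y.
Proof. by rewrite /affine dotpDl dotpNl; ring. Qed.

Lemma affine_sum (I : finType) (s : I -> R) (a : I -> 'rV[R]_n) (b : I -> R) y :
  affine (\sum_j s j *: a j) (\sum_j s j * b j) y = \sum_j s j * affine (a j) (b j) y.
Proof.
rewrite /affine dotp_suml -big_split; apply: eq_bigr => j _.
by rewrite dotpZl mulrDr.
Qed.

Lemma continuous_sumr (T : topologicalType) (I : Type) (r : seq I) (F : I -> T -> R) :
  (forall i, continuous (F i)) -> continuous (fun z => \sum_(i <- r) F i z).
Proof.
move=> F_cont; elim: r => [|i r IH].
  under eq_fun => z do rewrite big_nil.
  exact: cst_continuous.
under eq_fun => z do rewrite big_cons.
by move=> z; apply: continuousD; [exact: F_cont | exact: IH].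
Qed.

Lemma affine_continuous a b : continuous (affine a b).
Proof.
move=> z; apply: continuousD; last exact: cst_continuous.
apply: continuous_sumr => i y; apply: continuousM; first exact: cst_continuous.
exact: coord_continuous.
Qed.

Lemma norm_affine_le a b y : unit_ball y -> `|affine a b y| <= Num.sqrt (dotp a a) + `|b|.
Proof.
move=> y_ball; apply: le_trans (ler_normD _ _) _; rewrite lerD2r.
by rewrite -sqrtr_sqr ler_wsqrtr // dotp_sqr_le_ball.
Qed.

Lemma exists_ball_affine_ge a b :
  exists2 y, unit_ball y & Num.sqrt (dotp a a) <= `|affine a b y|.
Proof.
set r := Num.sqrt (dotp a a).
have [r0|r_neq0] := eqVneq r 0.
  by exists 0; [exact: unit_ball0 | rewrite r0 normr_ge0].
have r_sqr : r ^+ 2 = dotp a a by rewrite sqr_sqrtr ?dotp_ge0.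
have dotp_a (e : R) : dotp a ((e / r) *: a) = e * r.
  by rewrite dotpZr -r_sqr expr2 mulrA divfK.
have ball_a (e : R) : e ^+ 2 = 1 -> unit_ball ((e / r) *: a).
  by move=> e_sqr; rewrite /unit_ball /= dotpZl dotp_a mulrACA mulVf // mulr1 -expr2 e_sqr.
have r_ge0 : 0 <= r := sqrtr_ge0 _.
have [b_ge0|b_lt0] := lerP 0 b.
  exists ((1 / r) *: a); first by apply: ball_a; rewrite expr1n.
  by rewrite /affine dotp_a ler_normr; apply/orP; left; lra.
exists ((-1 / r) *: a); first by apply: ball_a; rewrite sqrrN expr1n.
by rewrite /affine dotp_a ler_normr; apply/orP; right; lra.
Qed.

End Affine.

Section Clamp.
Variable R : realType.

Definition clamp1 (t : R) : R := Num.max (-1) (Num.min 1 t).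

Lemma norm_clamp1_le t : `|clamp1 t| <= 1.
Proof. rewrite ler_norml le_max lexx ge_max ge_min lexx /= andbT; lra. Qed.

Lemma clamp1_id t : `|t| <= 1 -> clamp1 t = t.
Proof. by rewrite ler_norml => /andP[t_ge t_le]; rewrite /clamp1 min_r // max_r. Qed.

Lemma clamp1_continuous (T : topologicalType) (g : T -> R) :
  continuous g -> continuous (fun z => clamp1 (g z)).
Proof.
move=> g_cont; suff : continuous ((fun=> -1 : R) \max ((fun=> 1 : R) \min g)) by [].
apply: max_fun_continuous; first exact: cst_continuous.
by apply: min_fun_continuous => //; exact: cst_continuous.
Qed.

End Clamp.

Section Nodes.
Variables (R : realType) (n : nat).
Implicit Types (a y : 'rV[R]_n) (b : R).

(* The coordinates [(s, z_1, ..., z_n)] of [R^(n+1)], split as in [nondeg_simplex]. *)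
Definition prepend (s : R) (z : 'I_n -> R) (k : 'I_n.+1) : R :=
  match @fintype.split 1 n k with inl _ => s | inr k' => z k' end.

Lemma prepend0 s z : prepend s z ord0 = s.
Proof. by rewrite /prepend; case: splitP. Qed.

Lemma prepend_lift s z i : prepend s z (lift ord0 i) = z i.
Proof.
rewrite /prepend; case: splitP => [j /= j_eq|k /= k_eq].
  by move: (ltn_ord j); rewrite -j_eq /bump leq0n.
by congr z; apply: val_inj; move: k_eq; rewrite /= /bump leq0n add1n => -[].
Qed.

Definition coef_row a b : 'rV[R]_n.+1 := \row_k prepend b (a ord0) k.

Lemma coef_rowK (v : 'rV[R]_n.+1) : coef_row (\row_i v ord0 (lift ord0 i)) (v ord0 ord0) = v.
Proof.
apply/rowP => k; rewrite mxE; case: (unliftP ord0 k) => [i ->|->].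
  by rewrite prepend_lift mxE.
by rewrite prepend0.
Qed.

Lemma coef_row_eq0 a b : (coef_row a b == 0) = (a == 0) && (b == 0).
Proof.
apply/eqP/andP => [c0 | [/eqP-> /eqP->]]; last first.
  apply/rowP => k; rewrite !mxE.
  by case: (unliftP ord0 k) => [i ->|->]; rewrite ?prepend_lift ?prepend0 ?mxE.
split; apply/eqP; last by have := congr1 (fun v : 'rV_n.+1 => v ord0 ord0) c0; rewrite !mxE prepend0.
apply/rowP => i; have := congr1 (fun v : 'rV_n.+1 => v ord0 (lift ord0 i)) c0.
by rewrite !mxE prepend_lift.
Qed.

Variable x : 'I_n.+1 -> 'rV[R]_n.

Definition node_matrix : 'M[R]_n.+1 := \matrix_(j, k) prepend 1 (x j ord0) k.

Lemma nondeg_simplexE : nondeg_simplex x = (\det node_matrix != 0).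
Proof. by []. Qed.

Lemma affine_nodeE a b j : affine a b (x j) = (coef_row a b *m node_matrix^T) ord0 j.
Proof.
rewrite mxE big_ord_recl !mxE !prepend0 mulr1 addrC; congr (_ + _).
by apply: eq_bigr => i _; rewrite !mxE !prepend_lift.
Qed.

Lemma nondeg_simplexP : nondeg_simplex x <->
  (forall a b, (forall j, affine a b (x j) = 0) -> a = 0 /\ b = 0).
Proof.
rewrite nondeg_simplexE -det_tr; split=> [M_det a b vanish | affine_eq0].
  suff /eqP : coef_row a b = 0 by rewrite coef_row_eq0 => /andP[/eqP-> /eqP->].
  have M_unit : node_matrix^T \in unitmx by rewrite unitmxE unitfE.
  rewrite -(mulmxK M_unit (coef_row a b)).
  have -> : coef_row a b *m node_matrix^T = 0.
    by apply/rowP => j; rewrite -affine_nodeE vanish mxE.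
  by rewrite mul0mx.
apply/negP => /det0P[v v_neq0 v_ker].
have [a0 b0] : \row_i v ord0 (lift ord0 i) = 0 /\ v ord0 ord0 = 0.
  apply: affine_eq0 => j; rewrite affine_nodeE coef_rowK.
  by move/rowP: v_ker => /(_ j) ->; rewrite mxE.
by move: v_neq0; rewrite -[v]coef_rowK coef_row_eq0 a0 b0 !eqxx.
Qed.

Hypothesis x_nondeg : nondeg_simplex x.

Lemma exists_lagrange_basis : exists (la : 'I_n.+1 -> 'rV[R]_n) (lb : 'I_n.+1 -> R),
  forall i j, affine (la j) (lb j) (x i) = (i == j)%:R.
Proof.
set N := invmx node_matrix^T.
have M_unit : node_matrix^T \in unitmx by rewrite unitmxE unitfE det_tr.
exists (fun j => \row_i N j (lift ord0 i)), (fun j => N j ord0) => i j.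
rewrite affine_nodeE.
have -> : coef_row (\row_i N j (lift ord0 i)) (N j ord0) = row j N.
  rewrite -[RHS]coef_rowK; congr coef_row; last by rewrite mxE.
  by apply/rowP => k; rewrite !mxE.
by rewrite -row_mul mulVmx // !mxE eq_sym.
Qed.

(* Uniqueness of the interpolant: the difference vanishes at all nodes. *)
Lemma interpolates_lagrange la lb f a b y :
  (forall i j, affine (la j) (lb j) (x i) = (i == j)%:R) -> interpolates x f a b ->
  affine a b y = \sum_j f (x j) * affine (la j) (lb j) y.
Proof.
move=> lagr interp; rewrite -affine_sum; apply/eqP; rewrite -subr_eq0 -affineB.
have [-> ->] : a - \sum_j f (x j) *: la j = 0 /\ b - \sum_j f (x j) * lb j = 0.
  apply: (proj1 nondeg_simplexP x_nondeg) => i; rewrite affineB affine_sum interp.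
  rewrite (bigD1 i) //= lagr eqxx mulr1 big1 ?addr0 ?subrr // => j j_neq.
  by rewrite lagr eq_sym (negbTE j_neq) mulr0.
by rewrite affine00.
Qed.

End Nodes.

Section ProjectorNorm.
Variables (R : realType) (n : nat) (x : 'I_n.+1 -> 'rV[R]_n).

Lemma proj_norm_le (K : R) :
  (forall f a b y, (forall z, unit_ball z -> `|f z| <= 1) -> interpolates x f a b ->
     unit_ball y -> `|affine a b y| <= K) ->
  proj_norm x <= K.
Proof.
move=> K_ub; apply: ge_sup => [|t [f [a [b [y [_ f_le interp y_ball ->]]]]]].
  exists `|affine (0 : 'rV[R]_n) 0 0|, (fun=> 0), 0, 0, 0; split=> //.
  - exact/continuous_subspaceT/cst_continuous.
  - by move=> z _; rewrite normr0.
  - by move=> j; rewrite affine00.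
  - exact: unit_ball0.
exact: K_ub f_le interp y_ball.
Qed.

Hypotheses (x_ball : forall j, unit_ball (x j)) (x_nondeg : nondeg_simplex x).

Lemma interpolant_bounded : exists B : R, forall f a b y,
  (forall z, unit_ball z -> `|f z| <= 1) -> interpolates x f a b ->
  unit_ball y -> `|affine a b y| <= B.
Proof.
have [la [lb lagr]] := exists_lagrange_basis x_nondeg.
exists (\sum_j (Num.sqrt (dotp (la j) (la j)) + `|lb j|)) => f a b y f_le interp y_ball.
rewrite (interpolates_lagrange x_nondeg y lagr interp).
apply: le_trans (ler_norm_sum _ _ _) (ler_sum _ _) => j _.
rewrite normrM -[X in _ <= X]mul1r.
by apply: ler_pM => //; [exact: f_le | exact: norm_affine_le].
Qed.

Lemma proj_norm_ge f a b y : {within @unit_ball R n, continuous f} ->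
  (forall z, unit_ball z -> `|f z| <= 1) -> interpolates x f a b ->
  unit_ball y -> `|affine a b y| <= proj_norm x.
Proof.
move=> f_cont f_le interp y_ball; have [B B_ub] := interpolant_bounded.
apply: ub_le_sup; last by exists f, a, b, y.
by exists B => t [g [a' [b' [y' [_ g_le interp' y'_ball ->]]]]]; exact: B_ub interp' _.
Qed.

Lemma proj_norm_ge0 : 0 <= proj_norm x.
Proof.
apply: le_trans (normr_ge0 (affine (0 : 'rV[R]_n) 0 0)) (proj_norm_ge (f := fun=> 0) _ _ _ _).
- exact/continuous_subspaceT/cst_continuous.
- by move=> z _; rewrite normr0.
- by move=> j; rewrite affine00.
- exact: unit_ball0.
Qed.

Lemma proj_norm_ge_half_sqrt : (0 < n)%N -> Num.sqrt (n.+1%:R / 4) <= proj_norm x.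
Proof.
move=> n_gt0; have [la [lb lagr]] := exists_lagrange_basis x_nondeg.
have la_ge j : 1 / 4 <= dotp (la j) (la j).
  have [i i_neq] : exists i, i != j.
    exists (if j == ord0 then ord_max else ord0).
    case: (eqVneq j ord0) => [->|j_neq]; last by rewrite eq_sym.
    by rewrite -(inj_eq val_inj) /= -lt0n.
  apply: (dotp_ge_quarter (x_ball j) (x_ball i)).
  by have := lagr j j; have := lagr i j; rewrite /affine eqxx (negbTE i_neq) mulr1n mulr0n; lra.
have [s [s_sign s_le]] := exists_signs_sum_dotp_ge la.
set W := \sum_j s j *: la j in s_le; set B := \sum_j s j * lb j.
have W_ge : n.+1%:R / 4 <= dotp W W.
  apply: le_trans s_le; apply: le_trans (ler_sum _ (fun j _ => la_ge j)).
  by rewrite sumr_const card_ord -mulr_natr; lra.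
have W_nodes i : affine W B (x i) = s i.
  rewrite affine_sum (bigD1 i) //= lagr eqxx mulr1 big1 ?addr0 // => j j_neq.
  by rewrite lagr eq_sym (negbTE j_neq) mulr0.
have [y y_ball W_le] := exists_ball_affine_ge W B.
apply: le_trans (ler_wsqrtr W_ge) (le_trans W_le _).
apply: (proj_norm_ge (f := fun z => clamp1 (affine W B z)) _ _ _ y_ball).
- by apply/continuous_subspaceT/clamp1_continuous; exact: affine_continuous.
- by move=> z _; apply: norm_clamp1_le.
- move=> i; rewrite /= W_nodes clamp1_id //.
  by case: (s_sign i) => ->; rewrite ?normrN normr1.
Qed.

End ProjectorNorm.

Section Theta.
Variables (R : realType) (n : nat).

Lemma theta_le_proj_norm (x : 'I_n.+1 -> 'rV[R]_n) :
  (forall j, unit_ball (x j)) -> nondeg_simplex x -> theta R n <= proj_norm x.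
Proof.
move=> x_ball x_nondeg; apply: ge_inf; last by exists x.
by exists 0 => t [x' [x'_ball x'_nondeg ->]]; exact: proj_norm_ge0.
Qed.

Lemma le_theta (L : R) :
  (exists x : 'I_n.+1 -> 'rV[R]_n, (forall j, unit_ball (x j)) /\ nondeg_simplex x) ->
  (forall x : 'I_n.+1 -> 'rV[R]_n,
     (forall j, unit_ball (x j)) -> nondeg_simplex x -> L <= proj_norm x) ->
  L <= theta R n.
Proof.
move=> [x [x_ball x_nondeg]] L_lb; apply: lb_le_inf; first by exists (proj_norm x), x.
by move=> t [x' [x'_ball x'_nondeg ->]]; exact: L_lb.
Qed.

End Theta.

Section RegularSimplex.
Variables (R : realType) (n : nat).
Implicit Types (a y : 'rV[R]_n) (b : R).

Lemma dotp_delta a i : dotp a (delta_mx 0 i) = a ord0 i.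
Proof.
rewrite /dotp (bigD1 i) //= big1 => [|k k_neq]; rewrite mxE eqxx ?eqxx ?mulr1 ?addr0 //.
by rewrite (negbTE k_neq) mulr0.
Qed.

Lemma dotp_const1 a : dotp a (const_mx 1) = \sum_k a ord0 k.
Proof. by apply: eq_bigr => k _; rewrite mxE mulr1. Qed.

Variables (al ga be : R).
Hypotheses (n_gt0 : (0 < n)%N) (al_sqr : al ^+ 2 = (n%:R + 1) / n%:R)
  (ga_sqr : ga ^+ 2 = n%:R^-1) (params_sum : ga + al + n%:R * be = 0).

Definition simplex (j : 'I_n.+1) : 'rV[R]_n :=
  if unlift ord0 j is Some i then al *: delta_mx 0 i + be *: const_mx 1 else ga *: const_mx 1.

Let N_neq0 : n%:R != 0 :> R. Proof. by rewrite pnatr_eq0 -lt0n. Qed.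

Lemma simplex_cross : 2 * al * be + n%:R * be ^+ 2 = - n%:R^-1.
Proof.
have Nbe : n%:R * be = - (al + ga).
  by apply/eqP; rewrite -subr_eq0 opprK addrC (addrC al) params_sum.
have sqr_diff : al ^+ 2 - ga ^+ 2 = 1 by rewrite al_sqr ga_sqr mulrDl divff // div1r addrK.
apply: (mulfI N_neq0); rewrite mulrN mulfV // -[in RHS]sqr_diff.
transitivity (2 * al * (n%:R * be) + (n%:R * be) ^+ 2); first by ring.
by rewrite Nbe; ring.
Qed.

Lemma dotp_simplex a j : dotp a (simplex j) =
  if unlift ord0 j is Some i then al * a ord0 i + be * \sum_k a ord0 k
  else ga * \sum_k a ord0 k.
Proof.
rewrite /simplex; case: (unlift ord0 j) => [i|]; last by rewrite dotpZr dotp_const1.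
by rewrite dotpDr !dotpZr dotp_delta dotp_const1.
Qed.

Lemma sum_dotp_simplex a : \sum_j dotp a (simplex j) = 0.
Proof.
under eq_bigr => j _ do rewrite dotp_simplex.
rewrite big_ord_recl /= unlift_none.
under [X in _ + X]eq_bigr => i _ do rewrite liftK.
rewrite big_split /= -mulr_sumr sumr_const card_ord.
transitivity ((ga + al + n%:R * be) * \sum_k a ord0 k); first by ring.
by rewrite params_sum mul0r.
Qed.

Lemma sum_sqr_dotp_simplex a : \sum_j dotp a (simplex j) ^+ 2 = al ^+ 2 * dotp a a.
Proof.
under eq_bigr => j _ do rewrite dotp_simplex.
rewrite big_ord_recl /= unlift_none.
under [X in _ + X]eq_bigr => i _ do rewrite liftK.
set S := \sum_k a ord0 k.
have expand i : (al * a ord0 i + be * S) ^+ 2 =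
    al ^+ 2 * (a ord0 i * a ord0 i) + 2 * al * be * S * a ord0 i + be ^+ 2 * S ^+ 2.
  by ring.
under eq_bigr => i _ do rewrite expand.
rewrite !big_split /= -!mulr_sumr -/S sumr_const card_ord.
transitivity (al ^+ 2 * dotp a a + S ^+ 2 * (ga ^+ 2 + (2 * al * be + n%:R * be ^+ 2))).
  by rewrite /dotp; ring.
by rewrite simplex_cross ga_sqr subrr mulr0 addr0.
Qed.

Lemma dotp_simplex_self j : dotp (simplex j) (simplex j) = 1.
Proof.
have dotp11 : dotp (const_mx 1 : 'rV[R]_n) (const_mx 1) = n%:R.
  by rewrite dotp_const1; under eq_bigr => k _ do rewrite mxE; rewrite sumr_const card_ord.
rewrite /simplex; case: (unlift ord0 j) => [i|]; last first.
  by rewrite dotpZl dotpZr dotp11 mulrA -expr2 ga_sqr mulVf.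
rewrite !(dotpDl, dotpDr, dotpZl, dotpZr) dotp11 (dotpC (delta_mx 0 i) (const_mx 1)).
rewrite !dotp_delta !mxE !eqxx /=.
transitivity (al ^+ 2 + (2 * al * be + n%:R * be ^+ 2)); first by ring.
by rewrite simplex_cross al_sqr mulrDl divff // div1r addrK.
Qed.

Lemma simplex_ball j : unit_ball (simplex j).
Proof. by rewrite /unit_ball /= dotp_simplex_self. Qed.

Lemma simplex_nondeg : nondeg_simplex simplex.
Proof.
apply/nondeg_simplexP => a b vanish.
have b0 : b = 0.
  have : \sum_j affine a b (simplex j) = 0 by rewrite big1.
  rewrite big_split /= sum_dotp_simplex add0r sumr_const card_ord -[_ *+ n.+1]mulr_natl.
  by move/eqP; rewrite mulf_eq0 pnatr_eq0 /= => /eqP.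
have a_perp j : dotp a (simplex j) = 0 by rewrite -(vanish j) /affine b0 addr0.
have al_sqr_gt0 : 0 < al ^+ 2 by rewrite al_sqr divr_gt0 ?addr_gt0 ?ltr0n.
split=> //; apply/eqP; rewrite -dotp_eq0.
have := sum_sqr_dotp_simplex a; rewrite big1 => [/esym/eqP|j _]; last by rewrite a_perp expr0n.
by rewrite mulf_eq0 (gt_eqF al_sqr_gt0).
Qed.

Lemma proj_norm_simplex_le : proj_norm simplex <= Num.sqrt n.+1%:R.
Proof.
apply: proj_norm_le => f a b y f_le interp y_ball.
have N_gt0 : 0 < n%:R :> R by rewrite ltr0n.
have node_le j : (dotp a (simplex j) + b) ^+ 2 <= 1.
  have := f_le _ (simplex_ball j); rewrite -(interp j) /affine ler_norml => /andP[]; nra.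
have nodes_le : \sum_j (dotp a (simplex j) + b) ^+ 2 <= n%:R + 1.
  by apply: le_trans (ler_sum _ (fun j _ => node_le j)) _; rewrite sumr_const card_ord natr1.
have sum_nodes : \sum_j (dotp a (simplex j) + b) ^+ 2 =
    (n%:R + 1) / n%:R * (dotp a a + n%:R * b ^+ 2).
  have expand j : (dotp a (simplex j) + b) ^+ 2 =
      dotp a (simplex j) ^+ 2 + 2 * b * dotp a (simplex j) + b ^+ 2 by ring.
  under eq_bigr => j _ do rewrite expand.
  rewrite !big_split /= sum_sqr_dotp_simplex -mulr_sumr sum_dotp_simplex.
  rewrite sumr_const card_ord al_sqr mulr0 addr0 -[_ *+ n.+1]mulr_natl -natr1.
  by move: (n%:R : R) N_neq0 => N N0; field.
have ab_le : dotp a a + n%:R * b ^+ 2 <= n%:R.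
  rewrite -(ler_pM2l (_ : 0 < (n%:R + 1) / n%:R)); last by rewrite divr_gt0 // addr_gt0.
  by rewrite -sum_nodes divfK.
rewrite -sqrtr_sqr ler_wsqrtr // -natr1 /affine.
apply: sqr_add_le_weighted N_gt0 (le_trans _ ab_le).
by rewrite lerD2r dotp_sqr_le_ball.
Qed.

End RegularSimplex.

Lemma exists_simplex_params (R : realType) (n : nat) : (0 < n)%N -> exists al ga be : R,
  [/\ al ^+ 2 = (n%:R + 1) / n%:R, ga ^+ 2 = n%:R^-1 & ga + al + n%:R * be = 0].
Proof.
move=> n_gt0; have N_gt0 : 0 < n%:R :> R by rewrite ltr0n.
set s := Num.sqrt (n%:R : R); set t := Num.sqrt (n%:R + 1 : R).
exists (t / s), (- s^-1), (- (t / s - s^-1) / n%:R); split.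
- by rewrite expr_div_n !sqr_sqrtr // ltW // addr_gt0.
- by rewrite sqrrN exprVn sqr_sqrtr // ltW.
- by rewrite mulrCA divff ?gt_eqF // mulr1; ring.
Qed.

Lemma const_c_bounds (R : realType) : 0 <= const_c R <= 1 / 2.
Proof.
rewrite /const_c; set p := pi `^ 3%:R^-1; set q := (3%:R : R) `^ 6%:R^-1.
set s := Num.sqrt (12%:R * expR 1).
have p_ge0 : 0 <= p := powR_ge0 _ _.
have p_lt2 : p < 2.
  have p_cube : p ^+ 3 = pi.
    by rewrite -powR_mulrn ?pi_ge0 // -powRrM mulVf ?pnatr_eq0 // powRr1 // pi_ge0.
  have pi_lt4 : pi < 4 :> R by have := @pihalf_lt2 R; lra.
  rewrite ltNge; apply/negP => p_ge2.
  have : 2 ^+ 3 <= p ^+ 3 by rewrite lerXn2r // ?nnegrE //; lra.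
  rewrite p_cube; lra.
have q_ge1 : 1 <= q.
  rewrite /q -[X in X <= _](powRr0 (3%:R : R)).
  by apply: ler_powR; rewrite ?ler1n // invr_ge0 ler0n.
have s_ge4 : 4 <= s.
  have e_ge2 : 2 <= expR 1 :> R by have := @expR_ge1Dx R 1; lra.
  have -> : 4 = Num.sqrt (4 ^+ 2 : R) by rewrite sqrtr_sqr ger0_norm.
  by apply: ler_wsqrtr; rewrite expr2; lra.
have sq_ge4 : 4 <= s * q by rewrite -[4]mulr1 ler_pM //; lra.
apply/andP; split; first by rewrite divr_ge0 //; lra.
by rewrite ler_pdivrMr; lra.
Qed.

Lemma const_c_mul_sqrt_lt (R : realType) (n : nat) :
  const_c R * Num.sqrt n%:R < Num.sqrt (n.+1%:R / 4).
Proof.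
have /andP[c_ge0 c_le] := const_c_bounds R.
set z := const_c R * Num.sqrt n%:R.
have z_ge0 : 0 <= z by rewrite mulr_ge0 ?sqrtr_ge0.
have z_sqr : z ^+ 2 <= n%:R / 4.
  rewrite exprMn sqr_sqrtr ?ler0n //.
  have : const_c R ^+ 2 <= 1 / 4 by rewrite expr2; nra.
  have := ler0n R n; nra.
rewrite -(ger0_norm z_ge0) -sqrtr_sqr ltr_sqrt ?divr_gt0 ?ltr0n //.
by apply: le_lt_trans z_sqr _; rewrite ltr_pM2r ?invr_gt0 // ltr_nat.
Qed.

Theorem theorem11p4 (R : realType) (n : nat) (hn : (0 < n)%N) :
  const_c R * Num.sqrt (n%:R) < theta R n /\ theta R n <= Num.sqrt (n.+1%:R).
Proof.
have [al [ga [be [al_sqr ga_sqr params_sum]]]] := exists_simplex_params R hn.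
have vert_ball := simplex_ball hn al_sqr ga_sqr params_sum.
have vert_nondeg := simplex_nondeg hn al_sqr ga_sqr params_sum.
split.
  apply: lt_le_trans (const_c_mul_sqrt_lt R n) (le_theta _ _); first by exists (simplex al ga be).
  by move=> x x_ball x_nondeg; exact: proj_norm_ge_half_sqrt.
apply: le_trans (theta_le_proj_norm vert_ball vert_nondeg) _.
exact: proj_norm_simplex_le.
Qed.
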